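(* Let $k\ge1$ and let $G$ be a finite $k$-connected graph with $|V_G|\ge k+1$. If $\mathrm{Ent}(G)=k$, then $\mathrm{Cycl}(G)=\mathrm{Ent}(G)=k$.
   Context: Graphs are finite and undirected. A graph is $k$-connected if one must remove at least $k$ vertices to disconnect it (by convention $K_m$, $m\ge3$, has connectivity $m-1$). $\mathrm{Cycl}(G)$ (cyclicity) is the minimum size of a feedback vertex set of the symmetric digraph of $G$ (each edge viewed as two opposite arcs); equivalently the minimum size of a set of vertices containing an endpoint of every edge. Entanglement: in the game $\mathrm{Ent}(G,k)$ Thief plays against $k$ cops. Initially no cop is placed and Thief picks a vertex. Each round, Cops may do nothing, place a new cop (at most $k$ in total) on Thief's current vertex, or move a placed cop to Thief's current vertex; then Thief must move along an edge to an adjacent vertex not occupied by a cop, and is caught if he cannot. Infinite plays are won by Thief. $\mathrm{Ent}(G)$ is the least $k$ for which Cops have a winning strategy. *)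

From mathcomp Require Import all_boot.
Set Implicit Arguments.
Unset Strict Implicit.
Unset Printing Implicit Defensive.

Definition simple_graph (T : finType) (e : rel T) : Prop :=
  symmetric e /\ irreflexive e.

Definition connected_on (T : finType) (e : rel T) (A : {set T}) : Prop :=
  forall x y, x \in A -> y \in A ->
    connect [rel u v | [&& e u v, u \in A & v \in A]] x y.

(* k-connected: more than k vertices, and removing fewer than k vertices
   leaves a connected graph (so K_m has connectivity m-1). *)
Definition k_connected (T : finType) (e : rel T) (k : nat) : Prop :=
  k < #|T| /\ forall S : {set T}, #|S| < k -> connected_on e (~: S).

(* Cyclicity = minimum size of a vertex cover. *)
Definition vertex_cover (T : finType) (e : rel T) (S : {set T}) : bool :=
  [forall x, forall y, e x y ==> (x \in S) || (y \in S)].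

Definition Cycl (T : finType) (e : rel T) : nat :=
  \big[minn/#|T|]_(S : {set T} | vertex_cover e S) #|S|.

(* Since a cop is only ever placed/moved onto the thief's
   current vertex, and the thief always stands on a cop-free vertex, distinct
   cops occupy distinct vertices; a position is thus the set C of occupied
   vertices (|C| = number of placed cops) and the thief's vertex v.
   cop_move k C v C' : the cops may go from C to C' in one move. *)
Definition cop_move (T : finType) (k : nat) (C : {set T}) (v : T) (C' : {set T}) : Prop :=
  C' = C
  \/ (#|C| < k /\ C' = v |: C)
  \/ (exists2 c, c \in C & C' = v |: (C :\ c)).

(* cops_force e k C v : from position (C, v) with Cops to move, Cops have a
   strategy ensuring that Thief is caught after finitely many rounds
   (reachability winning condition; infinite plays are won by Thief). *)
Inductive cops_force (T : finType) (e : rel T) (k : nat) : {set T} -> T -> Prop :=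
  | CopsForce C v C' :
      cop_move k C v C' ->
      (forall w, e v w -> w \notin C' -> cops_force e k C' w) ->
      cops_force e k C v.

Definition cops_win (T : finType) (e : rel T) (k : nat) : Prop :=
  forall v : T, cops_force e k set0 v.

Definition Ent_eq (T : finType) (e : rel T) (k : nat) : Prop :=
  cops_win e k /\ forall j, j < k -> ~ cops_win e j.

(* A vertex cover S yields a strategy for |S| cops: a cop is put on every vertex
   of S the thief enters, and the thief cannot take two consecutive steps outside
   S, so he is caught once all of S is occupied.  Hence Ent(G) <= Cycl(G).
   Conversely, suppose every vertex cover has more than k vertices.  When a cop
   lands on the thief's vertex v, the set C of occupied vertices (at most k of
   them) cannot trap him: otherwise every neighbour of v outside C would have all
   its neighbours in C, and since G - (C \ v) is connected this would make C a
   vertex cover.  So the thief can always move to a free neighbour that itself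
   has a free neighbour, and k cops never catch him. *)

From mathcomp Require Import all_boot zify.
Set Implicit Arguments.
Unset Strict Implicit.
Unset Printing Implicit Defensive.

Lemma bigmin_leq_seq (I : eqType) (r : seq I) (P : pred I) (F : I -> nat) x i0 :
  i0 \in r -> P i0 -> \big[minn/x]_(i <- r | P i) F i <= F i0.
Proof.
elim: r => [|i r IHr] //; rewrite big_cons inE => /predU1P[-> ->|r_i0 P_i0].
  exact: geq_minl.
by case: ifP => _; rewrite ?geq_min IHr ?orbT.
Qed.

Section Cyclicity.

Variables (T : finType) (e : rel T).

Lemma Cycl_le (D : {set T}) : vertex_cover e D -> Cycl e <= #|D|.
Proof. exact: bigmin_leq_seq (mem_index_enum D). Qed.

Lemma Cycl_attained : exists2 D, vertex_cover e D & #|D| = Cycl e.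
Proof.
apply: (big_ind (fun m => exists2 D, vertex_cover e D & #|D| = m)).
- exists setT; last exact: cardsT.
  by apply/forallP=> x; apply/forallP=> y; rewrite in_setT implybT.
- by move=> _ _ [D1 cover1 <-] [D2 cover2 <-]; rewrite /minn; case: ifP => _;
    [exists D1 | exists D2].
- by move=> D coverD; exists D.
Qed.

End Cyclicity.

Section CoverStrategy.

Variables (T : finType) (e : rel T) (S : {set T}).
Hypothesis coverS : vertex_cover e S.

Lemma cover_edge x y : e x y -> x \notin S -> y \in S.
Proof.
by move=> exy xNS; move/forallP/(_ x)/forallP/(_ y): coverS; rewrite exy (negbTE xNS).
Qed.

Lemma cops_force_cover (C : {set T}) v :
  C \subset S -> v \in S :\: C -> cops_force e #|S| C v.
Proof.
have [n] := ubnP #|S :\: C|; elim: n C v => // n IHn C v ltCn sCS.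
rewrite inE => /andP[vNC vS].
have sC'S : v |: C \subset S by rewrite subUset sub1set vS.
have ltC'n : #|S :\: (v |: C)| < n.
  by rewrite setUC -setDDl; move: ltCn; rewrite (cardsD1 v (S :\: C)) !inE vNC vS.
have ltCS : #|C| < #|S| by apply/proper_card/properP; split=> //; exists v.
apply: (@CopsForce _ _ _ _ _ (v |: C)); first by right; left.
move=> w _ wNC'; have [wS | wNS] := boolP (w \in S).
  by apply: IHn; rewrite // inE wNC'.
apply: (@CopsForce _ _ _ _ _ (v |: C)); first by left.
by move=> x ewx xNC'; apply: IHn; rewrite // inE xNC' (cover_edge ewx wNS).
Qed.

Lemma cops_win_cover : cops_win e #|S|.
Proof.
have start w : w \in S -> cops_force e #|S| set0 w.
  by move=> wS; apply: cops_force_cover; rewrite ?sub0set // setD0.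
move=> v; have [vS | vNS] := boolP (v \in S); first exact: start.
apply: (@CopsForce _ _ _ _ _ set0); first by left.
by move=> w evw _; apply/start/(cover_edge evw).
Qed.

End CoverStrategy.

Lemma cop_move_cases (T : finType) k (C C' : {set T}) v :
  cop_move k C v C' -> #|C| <= k -> v \notin C ->
  C' = C \/ v \in C' /\ #|C'| <= k.
Proof.
move=> + leCk vNC; case=> [-> | [[ltCk ->] | [c cC ->]]]; [by left | right..].
  by rewrite setU11 cardsU1 vNC.
rewrite setU11 cardsU1 (cardsD1 c C) cC in leCk *.
by case: (v \notin C :\ c); lia.
Qed.

Section ThiefEscape.

Variables (T : finType) (e : rel T) (k : nat).
Hypotheses (simple_e : simple_graph e) (kconn : k_connected e k).

Lemma k_connected_edge : 0 < k -> exists v w, e v w.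
Proof.
move=> k_gt0; have /card_gt1P[v [x [_ _ vNx]]] : 1 < #|T| by case: kconn; lia.
have [_ conn] := kconn.
have connT : connected_on e (~: set0) by apply: conn; rewrite cards0.
rewrite setC0 in connT.
have /connectP[[|w p] /=] := connT v x (in_setT v) (in_setT x).
  by move=> _ xv; rewrite xv eqxx in vNx.
by case/andP=> /and3P[evw _ _] _ _; exists v, w.
Qed.

Lemma trap_vertex_cover (D : {set T}) v :
  v \in D -> #|D| <= k ->
  (forall w x, e v w -> w \notin D -> e w x -> x \in D) -> vertex_cover e D.
Proof.
move=> vD leDk trapped; have [[sym_e irr_e] [_ conn]] := (simple_e, kconn).
have ltSk : #|D :\ v| < k by rewrite (cardsD1 v D) vD in leDk.
set eS := [rel x y | [&& e x y, x \in ~: (D :\ v) & y \in ~: (D :\ v)]].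
have sym_eS : connect_sym eS.
  by apply: sym_connect_sym => x y /=; rewrite sym_e; congr (_ && _); exact: andbC.
set R := v |: [set w | e v w & w \notin D].
have closedR : closed eS R.
  apply: (intro_closed sym_eS) => x y /and3P[exy _].
  rewrite !inE negb_and negbK => /orP[-> // | yND].
  case/predU1P=> [xv | /andP[evx xND]]; last by rewrite (trapped x y) in yND.
  by rewrite -xv exy yND orbT.
have inR x : x \notin D -> x \in R.
  move=> xND; have vS : v \in ~: (D :\ v) by rewrite !inE eqxx.
  have xS : x \in ~: (D :\ v) by rewrite !inE (negbTE xND) andbF.
  by rewrite -(closed_connect closedR (conn _ ltSk v x vS xS)) setU11.
apply/forallP=> x; apply/forallP=> y; apply/implyP=> exy.
have [// | xND] := boolP (x \in D).
move: (inR x xND); rewrite !inE => /predU1P[xv | /andP[evx _]].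
  by rewrite xv vD in xND.
by rewrite (trapped x y).
Qed.

Hypothesis no_small_cover : forall D, vertex_cover e D -> k < #|D|.

Lemma free_path_from_occupied (C : {set T}) v : v \in C -> #|C| <= k ->
  exists w x, [/\ e v w, w \notin C, e w x & x \notin C].
Proof.
move=> vC leCk.
have [/existsP[w /existsP[x /and4P[evw wNC ewx xNC]]] | noPath] :=
  boolP [exists w, exists x, [&& e v w, w \notin C, e w x & x \notin C]].
  by exists w, x.
have coverC : vertex_cover e C.
  apply: (trap_vertex_cover vC leCk) => w x evw wNC ewx.
  apply: contraNT noPath => xNC; apply/existsP; exists w; apply/existsP; exists x.
  exact/and4P.
by have := no_small_cover coverC; rewrite ltnNge leCk.
Qed.

Lemma not_cops_force (C : {set T}) v w :
  #|C| <= k -> v \notin C -> e v w -> w \notin C -> ~ cops_force e k C v.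
Proof.
move=> + + + + force; elim: force w => {}C {}v C' move _ IHforce w leCk vNC evw wNC.
have [sym_e _] := simple_e.
case: (cop_move_cases move leCk vNC) => [C'C | [vC' leC'k]].
  by rewrite C'C in IHforce; apply: (IHforce w evw wNC v); rewrite // sym_e.
have [w' [x [evw' w'NC' ew'x xNC']]] := free_path_from_occupied vC' leC'k.
exact: (IHforce w' evw' w'NC' x).
Qed.

End ThiefEscape.

Theorem mainTheorem8 (T : finType) (e : rel T) (k : nat) :
  simple_graph e ->
  1 <= k ->
  k_connected e k ->
  k.+1 <= #|T| ->
  Ent_eq e k ->
  Cycl e = k.
Proof.
move=> simple_e k_gt0 kconn _ [cops_win_k minimal_k].
apply/eqP; rewrite eqn_leq; apply/andP; split; rewrite leqNgt; apply/negP.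
- move=> lt_k_Cycl.
  have no_small_cover D : vertex_cover e D -> k < #|D|.
    by move=> /Cycl_le; apply: leq_trans.
  have [v [w evw]] := k_connected_edge kconn k_gt0.
  apply: (not_cops_force simple_e kconn no_small_cover _ _ evw _ (cops_win_k v));
    by rewrite ?cards0 ?in_set0.
- move=> lt_Cycl_k; have [D coverD cardD] := Cycl_attained e.
  by apply: (minimal_k _ lt_Cycl_k); rewrite -cardD; apply: cops_win_cover.
Qed.
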